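(* Let $\mathcal{R}\subset[0,\infty)$ be a non-empty closed set and $\psi\colon\mathbb{R}\to[0,\infty]$ lower semicontinuous. Then $I\colon\mathbb{R}\to[0,\infty]$ defined by $I(a)=\inf_{\gamma\in\mathcal{R}}[\ell(\gamma;a)+\psi(\gamma)]$ is lower semicontinuous.
   Context: For $\gamma\ge0$: $\ell(\gamma;a)=\infty$ for $a<0$, $\ell(\gamma;0)=\gamma$, and $\ell(\gamma;a)=\gamma-a+a\log(a/\gamma)$ for $a>0$ (interpreted as $\infty$ when $\gamma=0$). *)

From HB Require Import structures.
From mathcomp Require Import all_boot all_order all_algebra.
From mathcomp Require Import all_classical all_reals all_analysis.
Set Implicit Arguments. Unset Strict Implicit. Unset Printing Implicit Defensive.
Import Order.TTheory GRing.Theory Num.Theory.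
Import numFieldNormedType.Exports.
Local Open Scope ring_scope.

(* ell gamma a, for gamma >= 0 (the value for gamma < 0 is irrelevant):
   +oo if a < 0; gamma if a = 0; gamma - a + a log(a/gamma) if a > 0,
   interpreted as +oo when gamma = 0. *)
Definition ell (R : realType) (g a : R) : \bar R :=
  if a < 0 then +oo%E
  else if a == 0 then g%:E
  else if g == 0 then +oo%E
  else (g - a + a * ln (a / g))%:E.

Definition Ifun (R : realType) (Rs : set R) (psi : R -> \bar R) (a : R) : \bar R :=
  ereal_inf [set (ell g a + psi g)%E | g in Rs].

From HB Require Import structures.
From mathcomp Require Import all_boot all_order all_algebra.
From mathcomp Require Import all_classical all_reals all_analysis.
From mathcomp Require Import ring lra.
Import Order.TTheory GRing.Theory Num.Theory.
Import numFieldNormedType.Exports.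
Local Open Scope classical_set_scope.
Local Open Scope ring_scope.

(* For fixed g >= 0, ell g is the supremum over c > 0 of the affine functions
   a |-> g + a ln c - g c (attained at c = a / g).  Each of them is continuous in
   (g, a), so ell, and with it ell + psi, is jointly lower semicontinuous on
   g >= 0.  To bound I from below near a0, a compactness argument propagates
   t < ell g a + psi g uniformly from a0 to its neighbours for g in
   Rs `&` [0, M], while for g > M the choice c = 1/2 gives
   ell g a >= g / 2 - a, which already exceeds t. *)

Section ell_bounds.
Context {R : realType}.
Implicit Types (g a c s t : R) (x y : \bar R).

Lemma ln_le_subr1 {x : R} : 0 < x -> ln x <= x - 1.
Proof.
move=> x0; have := @le_ln1Dx R (x - 1); rewrite addrCA subrr addr0; apply.
by rewrite ltrBrDl addrN.
Qed.

Lemma ell_ge_dual g a c : 0 <= g -> 0 < c ->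
  ((g + a * ln c - g * c)%:E <= ell g a)%E.
Proof.
move=> g0 c0; rewrite /ell; have [//|a0] := ltP a 0; first by rewrite leey.
have [->|an0] := eqVneq a 0.
  by rewrite lee_fin mul0r addr0 gerBl mulr_ge0 // ltW.
have {}a0 : 0 < a by rewrite lt_neqAle eq_sym an0.
have [//|gn0] := eqVneq g 0; first by rewrite leey.
have {}g0 : 0 < g by rewrite lt_neqAle eq_sym gn0.
have gca : 0 < g * c / a by rewrite divr_gt0 ?mulr_gt0.
have tangent := ln_le_subr1 gca.
have -> : a / g = (g * c / a)^-1 * c by field; rewrite ?gt_eqF.
rewrite lnM ?posrE ?invr_gt0 // lnV ?posrE // lee_fin.
have : a * ln (g * c / a) <= a * (g * c / a - 1) by rewrite ler_pM2l.
have -> : a * (g * c / a - 1) = g * c - a by field; rewrite gt_eqF.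
lra.
Qed.

Lemma ell_ge0 g a : 0 <= g -> (0 <= ell g a)%E.
Proof.
move=> g0; apply: le_trans (ell_ge_dual g a 1 g0 ltr01).
by rewrite ln1 mulr0 addr0 mulr1 subrr.
Qed.

Lemma ell_ge_half g a : 0 <= g -> ((g / 2 - a)%:E <= ell g a)%E.
Proof.
move=> g0; have [a0|a0] := ltP a 0; first by rewrite /ell a0 leey.
apply: le_trans (ell_ge_dual g a 2^-1 g0 _) => //; rewrite lee_fin.
have : ln (2 : R) <= 1 by have := @ln_le_subr1 2 ltac:(lra); lra.
rewrite lnV ?posrE // => ln2.
have : a * ln 2 <= a by rewrite -[leRHS]mulr1 ler_wpM2l.
lra.
Qed.

Lemma lt_ell_dual {g a s} : 0 <= g -> 0 <= a -> (s%:E < ell g a)%E ->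
  exists2 c, 0 < c & s < g + a * ln c - g * c.
Proof.
move=> g0; rewrite le_eqVlt => /predU1P[<-|a0].
  rewrite /ell ltxx eqxx lte_fin => sg.
  exists ((g - s) / (g + 1)); first by rewrite divr_gt0 ?subr_gt0 //; lra.
  have : g * ((g - s) / (g + 1)) < g - s by rewrite mulrA ltr_pdivrMr; nra.
  lra.
have [g00 _|gn0] := eqVneq g 0.
  exists (expR ((`|s| + 1) / a)); first exact: expR_gt0.
  rewrite g00 expRK mulrCA divff ?gt_eqF // mulr1 mul0r subr0 add0r.
  by have := ler_norm s; lra.
rewrite /ell (lt_gtF a0) (gt_eqF a0) (negPf gn0) lte_fin => sa.
have {}g0 : 0 < g by rewrite lt_neqAle eq_sym gn0.
exists (a / g); first by rewrite divr_gt0.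
by rewrite mulrCA divff ?gt_eqF // mulr1; lra.
Qed.

Lemma ell_lsc {g0 a0 s} : 0 <= g0 -> (s%:E < ell g0 a0)%E ->
  \forall g \near g0 & a \near a0, 0 <= g -> (s%:E < ell g a)%E.
Proof.
move=> g00 s_ell; have [a00|a00] := ltP a0 0.
  near=> g a => _; suff a_lt0 : a < 0 by rewrite /ell a_lt0 ltey.
  by near: a; exact: lt_nbhsl.
have [c c0 s_lt] := lt_ell_dual g00 a00 s_ell.
pose f (p : R * R) := p.1 + p.2 * ln c - p.1 * c.
have f_cont : continuous f.
  move=> p; apply: cvgB; last by apply: cvgMl; exact: cvg_fst.
  by apply: cvgD; [exact: cvg_fst | apply: cvgMl; exact: cvg_snd].
have : \forall p \near (g0, a0), s < f p.
  exact: (f_cont (g0, a0) [set x | s < x] (lt_nbhsr s_lt)).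
apply: filterS => -[g a] /= s_f g_ge0.
by apply: (lt_le_trans _ (ell_ge_dual g a c g_ge0 c0)); rewrite lte_fin.
Unshelve. all: by end_near. Qed.

Lemma EFin_lt_between {t x} : (t%:E < x)%E -> exists2 t', t < t' & (t'%:E < x)%E.
Proof.
case: x => [r| |] //= => [|_]; last by exists (t + 1); [lra | exact: ltey].
by rewrite lte_fin => tr; exists ((t + r) / 2); rewrite ?lte_fin; lra.
Qed.

Lemma EFin_lt_adde_split {t x y} : (-oo < x)%E -> (-oo < y)%E ->
  (t%:E < x + y)%E -> exists2 s, (s%:E < x)%E & ((t - s)%:E < y)%E.
Proof.
case: x => [r| |] //; case: y => [q| |] // _ _.
- rewrite -EFinD lte_fin => tl; exists (r - (r + q - t) / 2); rewrite lte_fin; lra.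
- by move=> _; exists (r - 1); rewrite ?ltey // lte_fin; lra.
- by move=> _; exists (t - q + 1); rewrite ?ltey // lte_fin; lra.
- by move=> _; exists 0; exact: ltey.
Qed.

Lemma ell_adde_lsc {psi : R -> \bar R} {g0 a0 t} :
  lower_semicontinuous psi -> 0 <= g0 -> (-oo < psi g0)%E ->
  (t%:E < ell g0 a0 + psi g0)%E ->
  \forall g \near g0 & a \near a0, 0 <= g -> (t%:E < ell g a + psi g)%E.
Proof.
move=> psi_lsc g00 psi_fin t_lt.
have ell_fin : (-oo < ell g0 a0)%E := lt_le_trans ltNy0 (ell_ge0 g0 a0 g00).
have [s s_ell ts_psi] := EFin_lt_adde_split ell_fin psi_fin t_lt.
have [V V_g0 V_psi] := psi_lsc g0 _ ts_psi.
have near_psi : \forall g \near g0 & a \near a0, ((t - s)%:E < psi g)%E.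
  exists (V, setT); first by split=> //; exact: filterT.
  by move=> [g a] [/= /V_psi].
apply: filterS2 (ell_lsc g00 s_ell) near_psi => -[g a] /= s_ell' ts_psi' g_ge0.
by rewrite -(subrKC s t) EFinD lteD // s_ell'.
Qed.
End ell_bounds.

Section Ifun.
Context {R : realType} {Rs : set R} {psi : R -> \bar R}.
Hypotheses (Rs_ge0 : Rs `<=` [set x | 0 <= x]) (psi_ge0 : forall x, (0 <= psi x)%E).
Hypothesis psi_lsc : lower_semicontinuous psi.

Lemma Ifun_lt_near_compact {K : set R} {a0 t} : compact K -> K `<=` Rs ->
  (t%:E < Ifun Rs psi a0)%E ->
  \forall a \near a0, K `<=` (fun g => (t%:E < ell g a + psi g)%E).
Proof.
move=> /compact_near_coveringP/near_covering_withinP K_cover K_Rs t_lt_I.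
apply: (K_cover R (nbhs a0) (fun a g => (t%:E < ell g a + psi g)%E)) => // g Kg.
have t_lt : (t%:E < ell g a0 + psi g)%E.
  by apply: (lt_le_trans t_lt_I); apply: ereal_inf_lbound; exists g => //; exact: K_Rs.
have psi_fin : (-oo < psi g)%E := lt_le_trans ltNy0 (psi_ge0 g).
move: (ell_adde_lsc psi_lsc (Rs_ge0 _ (K_Rs _ Kg)) psi_fin t_lt); apply: filterS.
by move=> [g' a] /= t_lt' /K_Rs/Rs_ge0; exact: t_lt'.
Qed.
End Ifun.

Theorem proposition7 (R : realType) (Rs : set R) (psi : R -> \bar R) :
  Rs !=set0 -> closed Rs -> Rs `<=` [set x | 0 <= x] ->
  (forall x, (0 <= psi x)%E) -> lower_semicontinuous psi ->
  lower_semicontinuous (Ifun Rs psi).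
Proof.
move=> _ Rs_closed Rs_ge0 psi_ge0 psi_lsc a0 t /EFin_lt_between[t' tt' t'_lt_I].
pose M := 2 * (`|t'| + `|a0| + 1).
pose K := `[0, M] `&` Rs.
have K_compact : compact K by apply: compact_closedI => //; exact: segment_compact.
have near_K := Ifun_lt_near_compact Rs_ge0 psi_ge0 psi_lsc K_compact
  (@subIsetr _ _ _) t'_lt_I.
have near_a_lt : \forall a \near a0, a < `|a0| + 1.
  by apply: lt_nbhsl; have := ler_norm a0; lra.
exists [set a | K `<=` (fun g => (t'%:E < ell g a + psi g)%E) /\ a < `|a0| + 1].
  exact: filterI near_K near_a_lt.
move=> a [K_a a_lt] /=; apply: (@lt_le_trans _ _ t'%:E); first by rewrite lte_fin.
apply/ereal_infP => _ [g Rs_g <-].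
have [g_le_M|M_lt_g] := leP g M.
  by apply/ltW/K_a; split=> //=; rewrite in_itv /= Rs_ge0.
apply: (le_trans _ (leeDl _ (psi_ge0 g))).
apply: (le_trans _ (ell_ge_half g a (Rs_ge0 _ Rs_g))).
by rewrite lee_fin; move: M_lt_g; rewrite /M; have := ler_norm t'; lra.
Qed.
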